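(* For a real tensor $T\in\mathbb{R}^{n\times n\times n}$ of order 3, the following are equivalent: (i) $T\in\mathrm{OT}_n(\mathbb{R})$; (ii) for each of the three families of slices (the $x$-slices $X_1,\dots,X_n$, the $y$-slices $Y_1,\dots,Y_n$, and the $z$-slices $Z_1,\dots,Z_n$), denoting the family by $M_1,\dots,M_n$, the matrices $M_kM_l^T$ and $M_k^TM_l$ are symmetric for all $k,l\in\{1,\dots,n\}$.
   Context: Associate to $T$ the trilinear form $t(x,y,z)=\sum_{i,j,k}T_{ijk}x_iy_jz_k$. $\mathrm{OT}_n(K)$ is the set of tensors whose trilinear form can be written $t(x,y,z)=g(Ax,By,Cz)$ with $A,B,C\in M_n(K)$ orthogonal ($A^TA=\mathrm{Id}$ etc.) and $g(x,y,z)=\sum_{i=1}^n\alpha_ix_iy_iz_i$, $\alpha_i\in K$. Slices: $X_k=(T_{kjl})_{j,l}$ (matrix of the bilinear form $\partial t/\partial x_k$ in $(y,z)$), $Y_k=(T_{ikl})_{i,l}$ (matrix of $\partial t/\partial y_k$ in $(x,z)$), $Z_k=(T_{ijk})_{i,j}$ (matrix of $\partial t/\partial z_k$ in $(x,y)$). *)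

From HB Require Import structures.
From mathcomp Require Import all_boot all_order all_algebra.
Set Implicit Arguments. Unset Strict Implicit. Unset Printing Implicit Defensive.
Import Order.TTheory GRing.Theory Num.Theory.
Local Open Scope ring_scope.

Definition tensor3 (R : Type) (n : nat) := 'I_n -> 'I_n -> 'I_n -> R.

Definition trilin (R : ringType) n (T : tensor3 R n) (x y z : 'cV[R]_n) : R :=
  \sum_(i < n) \sum_(j < n) \sum_(k < n) T i j k * x i 0 * y j 0 * z k 0.

Definition diag_trilin (R : ringType) n (alpha : 'I_n -> R) (x y z : 'cV[R]_n) : R :=
  \sum_(i < n) alpha i * x i 0 * y i 0 * z i 0.

Definition orthogonal_mx (R : ringType) n (A : 'M[R]_n) : Prop := A^T *m A = 1%:M.

Definition in_OT (R : ringType) n (T : tensor3 R n) : Prop :=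
  exists (A B C : 'M[R]_n) (alpha : 'I_n -> R),
    [/\ orthogonal_mx A, orthogonal_mx B, orthogonal_mx C &
      forall x y z : 'cV[R]_n,
        trilin T x y z = diag_trilin alpha (A *m x) (B *m y) (C *m z)].

Definition xslice (R : Type) n (T : tensor3 R n) (k : 'I_n) : 'M[R]_n :=
  \matrix_(j, l) T k j l.
Definition yslice (R : Type) n (T : tensor3 R n) (k : 'I_n) : 'M[R]_n :=
  \matrix_(i, l) T i k l.
Definition zslice (R : Type) n (T : tensor3 R n) (k : 'I_n) : 'M[R]_n :=
  \matrix_(i, j) T i j k.

Definition symmetric_mx (R : Type) n (P : 'M[R]_n) : Prop := P^T = P.

Definition slice_cond (R : ringType) n (M : 'I_n -> 'M[R]_n) : Prop :=
  forall k l : 'I_n,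
    symmetric_mx (M k *m (M l)^T) /\ symmetric_mx ((M k)^T *m M l).

From mathcomp Require Import all_boot all_order all_algebra perm.
From mathcomp Require Import complex ring.
Set Implicit Arguments. Unset Strict Implicit. Unset Printing Implicit Defensive.
Import Order.TTheory GRing.Theory Num.Theory.
Local Open Scope ring_scope.

(* If T = sum_r alpha_r a_r (x) b_r (x) c_r with orthonormal bases (a_r), (b_r), (c_r),
   every x-slice is X_k = P^T D_k Q with D_k diagonal and P, Q orthogonal, so
   X_k X_l^T = P^T D_k D_l P and X_k^T X_l = Q^T D_k D_l Q are symmetric; the same
   holds for the other two families.

   Conversely, the slice condition makes the symmetric matrices X_k X_l^T commute,
   so one orthogonal B diagonalises all of them (a commuting family of real
   symmetric matrices has a common real eigenvector because the imaginary part of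
   a complex eigenvalue must vanish).  Likewise C diagonalises the X_k^T X_l and A
   the Z_k Z_l^T.  Rotating T by A, B, C in its three modes gives a tensor U whose
   x-slices N_r inherit these diagonality properties, and whose y- and z-slices
   still satisfy the slice condition.  From these, N_r^T N_s = N_r N_s^T = 0 for
   r <> s, and the symmetry of the y- and z-slice products forces each N_r to have
   at most one nonzero entry.  The positions of these entries form two partial
   permutations, which extend to permutations s, t; so
   U = sum_r alpha_r e_r (x) e_(s r) (x) e_(t r), and undoing the rotation gives an
   orthogonal decomposition of T. *)

(** * Real symmetric matrices *)

Section RealSymmetric.
Variable R : rcfType.

Definition dotr n (u v : 'rV[R]_n) : R := (u *m v^T) 0 0.

Lemma dotrE n (u v : 'rV[R]_n) : dotr u v = \sum_i u 0 i * v 0 i.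
Proof. by rewrite /dotr !mxE; apply: eq_bigr => i _; rewrite mxE. Qed.

Lemma dotrC n (u v : 'rV[R]_n) : dotr u v = dotr v u.
Proof. by rewrite !dotrE; apply: eq_bigr => i _; rewrite mulrC. Qed.

Lemma dotr_ge0 n (u : 'rV[R]_n) : 0 <= dotr u u.
Proof. by rewrite dotrE sumr_ge0 // => i _; rewrite -expr2 sqr_ge0. Qed.

Lemma dotr_gt0 n (u : 'rV[R]_n) : u != 0 -> 0 < dotr u u.
Proof.
apply: contraNT; rewrite lt0r dotr_ge0 andbT negbK dotrE.
under eq_bigr do rewrite -expr2.
move=> /eqP /psumr_eq0P u0; apply/eqP/rowP => i; rewrite mxE.
have /eqP := u0 (fun j _ => sqr_ge0 _) i isT.
by rewrite sqrf_eq0 => /eqP.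
Qed.

Lemma dotrBl n (u v w : 'rV[R]_n) : dotr (u - v) w = dotr u w - dotr v w.
Proof. by rewrite /dotr mulmxBl !mxE. Qed.

Lemma dotrDr n (u v w : 'rV[R]_n) : dotr w (u + v) = dotr w u + dotr w v.
Proof. by rewrite /dotr linearD /= mulmxDr !mxE. Qed.

Lemma dotrZl n a (u w : 'rV[R]_n) : dotr (a *: u) w = a * dotr u w.
Proof. by rewrite /dotr -scalemxAl !mxE. Qed.

Lemma dotrZr n a (u w : 'rV[R]_n) : dotr w (a *: u) = a * dotr w u.
Proof. by rewrite dotrC dotrZl dotrC. Qed.

Lemma dotr_mulmx_sym n (S : 'M[R]_n) (u v : 'rV[R]_n) : S^T = S ->
  dotr (u *m S) v = dotr u (v *m S).
Proof. by move=> hS; rewrite /dotr trmx_mul hS mulmxA. Qed.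


Lemma stablemx_eigenpair n (S W : 'M[R]_n) : stablemx W S -> W != 0 ->
  exists (a b : R) (p q : 'rV[R]_n),
    [/\ (p != 0) || (q != 0), (p <= W)%MS, (q <= W)%MS,
        p *m S = a *: p - b *: q & q *m S = b *: p + a *: q].
Proof.
move=> WS W0; set B := row_base W.
have BW : (B :=: W)%MS := eq_row_base W.
have BS : stablemx B S by rewrite BW; apply: submx_trans WS; rewrite submxMr ?BW.
set X := B *m S *m pinvmx B.
have XB : X *m B = B *m S by rewrite mulmxKpV.
have [lam /eigenvalueP [c hc c0]] : exists lam, eigenvalue (map_mx (real_complex R) X) lam.
  have /closed_rootP [x rx] : size (char_poly (map_mx (real_complex R) X)) != 1%N.
    by rewrite size_char_poly; move: W0; rewrite -mxrank_eq0; case: (\rank W).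
  by exists x; rewrite eigenvalue_root_char.
set a := complex.Re lam; set b := complex.Im lam.
set c1 := map_mx (@complex.Re R) c; set c2 := map_mx (@complex.Im R) c.
have c1X : c1 *m X = a *: c1 - b *: c2.
  apply/rowP => j; have /rowP /(_ j) := hc; move/(congr1 (@complex.Re R)).
  rewrite !mxE raddf_sum /a /b; case: (lam) (c 0 j) => [x y] [u v] /= <-.
  by apply: eq_bigr => i _; rewrite !mxE; case: (c 0 i) => u' v' /=; ring.
have c2X : c2 *m X = b *: c1 + a *: c2.
  apply/rowP => j; have /rowP /(_ j) := hc; move/(congr1 (@complex.Im R)).
  rewrite !mxE raddf_sum /a /b; case: (lam) (c 0 j) => [x y] [u v] /=.
  rewrite addrC => <-.
  by apply: eq_bigr => i _; rewrite !mxE; case: (c 0 i) => u' v' /=; ring.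
exists a, b, (c1 *m B), (c2 *m B); split.
- rewrite !mulmx_free_eq0 ?row_base_free //; apply: contraNT c0.
  rewrite negb_or !negbK => /andP [/eqP c10 /eqP c20]; apply/eqP/rowP => j.
  have /rowP /(_ j) := c10; have /rowP /(_ j) := c20; rewrite !mxE.
  by case: (c 0 j) => x y /= -> ->.
- by rewrite -BW submxMl.
- by rewrite -BW submxMl.
- by rewrite -mulmxA -XB mulmxA c1X mulmxBl -!scalemxAl.
by rewrite -mulmxA -XB mulmxA c2X mulmxDl -!scalemxAl.
Qed.

Lemma symmetric_stablemx_eigenvector n (S W : 'M[R]_n) :
  S^T = S -> stablemx W S -> W != 0 ->
  exists a (v : 'rV[R]_n), [/\ v != 0, (v <= W)%MS & v *m S = a *: v].
Proof.
move=> symS WS W0.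
have [a [b [p [q [pq0 pW qW pS qS]]]]] := stablemx_eigenpair WS W0.
have spq_gt0 : 0 < dotr p p + dotr q q.
  have [p0|p0] := eqVneq p 0; last by rewrite ltr_wpDr ?dotr_ge0 ?dotr_gt0.
  by rewrite p0 eqxx /= in pq0; rewrite ltr_wpDl ?dotr_ge0 ?dotr_gt0.
(* Symmetry of [S] forces the imaginary part [b] of the eigenvalue to vanish. *)
have b0 : b = 0.
  have e : a * dotr p q - b * dotr q q = b * dotr p p + a * dotr p q.
    have := dotr_mulmx_sym p q symS.
    by rewrite pS qS dotrBl dotrDr !dotrZl !dotrZr.
  have : b * (dotr p p + dotr q q) =
         (b * dotr p p + a * dotr p q) - (a * dotr p q - b * dotr q q) by ring.
  by rewrite -e subrr => /eqP; rewrite mulf_eq0 (gt_eqF spq_gt0) orbF => /eqP.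
rewrite b0 scale0r subr0 in pS; rewrite b0 scale0r add0r in qS.
exists a; have [p0|p0] := eqVneq p 0; last by exists p.
by rewrite p0 eqxx /= in pq0; exists q.
Qed.


Lemma symmetric_common_eigenvector n (Ss : seq 'M[R]_n) (W : 'M[R]_n) :
  {in Ss, forall S, S^T = S} -> {in Ss &, forall S S', S *m S' = S' *m S} ->
  {in Ss, forall S, stablemx W S} -> W != 0 ->
  exists2 v : 'rV[R]_n, v != 0 &
    (v <= W)%MS /\ {in Ss, forall S, exists a, v *m S = a *: v}.
Proof.
elim: Ss W => [|S Ss IH] W symSs commSs WSs W0.
  have [i Wi0] : exists i, row i W != 0.
    apply/existsP; apply: contraNT W0; rewrite negb_exists => /forallP Wi0.
    by apply/eqP/row_matrixP => i; rewrite row0; apply/eqP/negbNE.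
  by exists (row i W) => //; split; [exact: row_sub | move=> S].
have [a [v0 [v00 v0W v0S]]] :=
  symmetric_stablemx_eigenvector (symSs S (mem_head _ _)) (WSs S (mem_head _ _)) W0.
(* Restrict to the [a]-eigenspace of [S] inside [W], which the other
   matrices of the family preserve since they commute with [S]. *)
set W' := (W :&: kermx (S - a%:M))%MS.
have W'S : W' *m (S - a%:M) = 0 by apply/eqP; rewrite -sub_kermx capmxSr.
have W'0 : W' != 0.
  apply: contraNneq v00 => W'0; rewrite -(submx0 v0) -W'0 sub_capmx v0W.
  by rewrite sub_kermx mulmxBr v0S mul_mx_scalar subrr eqxx.
have [|||v v0' [vW' vE]] := IH W' _ _ _ W'0.
- by move=> S' S'Ss; apply: symSs; rewrite in_cons S'Ss orbT.
- by move=> S1 S2 S1Ss S2Ss; apply: commSs; rewrite in_cons ?S1Ss ?S2Ss orbT.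
- move=> S' S'Ss; have SS' : S' *m (S - a%:M) = (S - a%:M) *m S'.
    rewrite mulmxBr mulmxBl scalar_mxC; congr (_ - _).
    by apply: commSs; rewrite in_cons ?S'Ss ?eqxx ?orbT.
  rewrite sub_capmx sub_kermx -mulmxA SS' mulmxA W'S mul0mx eqxx andbT.
  by apply: submx_trans (WSs S' _); [rewrite submxMr ?capmxSl|rewrite in_cons S'Ss orbT].
exists v => //; split; first exact: submx_trans vW' (capmxSl _ _).
move=> S'; rewrite in_cons => /orP [/eqP ->|]; last exact: vE.
exists a; have : (v <= kermx (S - a%:M))%MS by apply: submx_trans vW' (capmxSr _ _).
by rewrite sub_kermx mulmxBr mul_mx_scalar subr_eq0 => /eqP.
Qed.

Lemma symmetric_orthonormal_eigenrows n (Ss : seq 'M[R]_n) :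
  {in Ss, forall S, S^T = S} -> {in Ss &, forall S S', S *m S' = S' *m S} ->
  forall k, (k <= n)%N -> exists M : 'M[R]_(k, n), M *m M^T = 1%:M /\
    {in Ss, forall S, exists d : 'rV_k, M *m S = diag_mx d *m M}.
Proof.
move=> symSs commSs; elim=> [|k IH] lt_kn.
  exists 0; split; first by rewrite [LHS]flatmx0 [RHS]flatmx0.
  by move=> S _; exists 0; rewrite [LHS]flatmx0 [RHS]flatmx0.
have [M [MM dM]] := IH (ltnW lt_kn).
(* [kermx M^T] is the orthogonal complement of the rows of [M]. *)
set W := kermx M^T.
have WM : W *m M^T = 0 by apply/eqP; rewrite -sub_kermx.
have WSs : {in Ss, forall S, stablemx W S}.
  move=> S SSs; have [d dS] := dM S SSs.
  rewrite sub_kermx -mulmxA -[X in X *m M^T](symSs S SSs).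
  by rewrite -trmx_mul dS trmx_mul mulmxA WM mul0mx.
have W0 : W != 0.
  rewrite -mxrank_eq0 mxrank_ker -lt0n subn_gt0.
  exact: leq_ltn_trans (rank_leq_col _) lt_kn.
have [v v0 [vW vE]] := symmetric_common_eigenvector symSs commSs WSs W0.
set w := (Num.sqrt (dotr v v))^-1 *: v.
have wM : w *m M^T = 0.
  by rewrite /w -scalemxAl; apply/eqP; rewrite scaler_eq0 -sub_kermx vW orbT.
have ww : w *m w^T = 1%:M.
  apply/matrixP => i j; rewrite !ord1 [RHS]mxE eqxx /= -/(dotr w w).
  rewrite /w dotrZl dotrZr mulrA -invfM -expr2 sqr_sqrtr ?dotr_ge0 //.
  by rewrite mulVf // gt_eqF // dotr_gt0.
have wMM : col_mx w M *m (col_mx w M)^T = 1%:M.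
  rewrite tr_col_mx mul_col_mx !mul_mx_row ww wM -[M *m w^T]trmxK trmx_mul trmxK wM trmx0 MM.
  by rewrite -block_mxEv -scalar_mx_block.
suff dwM : {in Ss, forall S, exists d : 'rV_(1 + k),
    col_mx w M *m S = diag_mx d *m col_mx w M} by exists (col_mx w M).
move=> S SSs; have [d dS] := dM S SSs; have [a va] := vE S SSs.
exists (row_mx (const_mx a) d).
rewrite diag_mx_row mul_block_col !mul0mx addr0 add0r mul_col_mx -dS.
congr col_mx; rewrite (_ : diag_mx _ = a%:M); last first.
  by apply/matrixP => i j; rewrite !ord1 !mxE eqxx.
by rewrite mul_scalar_mx /w -scalemxAl va scalerA mulrC -scalerA.
Qed.

Lemma symmetric_codiagonalization n (Ss : seq 'M[R]_n) :
  {in Ss, forall S, S^T = S} -> {in Ss &, forall S S', S *m S' = S' *m S} ->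
  exists2 V : 'M[R]_n, orthogonal_mx V & {in Ss, forall S, is_diag_mx (V *m S *m V^T)}.
Proof.
move=> symSs commSs.
have [V [VV dV]] := symmetric_orthonormal_eigenrows symSs commSs (leqnn n).
exists V; first exact: mulmx1C.
move=> S SSs; have [d dS] := dV S SSs.
by rewrite dS -mulmxA VV mulmx1 diag_mx_is_diag.
Qed.

End RealSymmetric.

(** * Families of slices *)

Section SliceFamilies.
Variables (R : comNzRingType) (n : nat).
Implicit Types (M : 'I_n -> 'M[R]_n) (P Q : 'M[R]_n).

Lemma slice_cond_trmx M : slice_cond (fun k => (M k)^T) <-> slice_cond M.
Proof.
by split=> sM k l; have [] := sM k l; rewrite ?trmxK => sM1 sM2; split.
Qed.

Lemma slice_cond_comm M : slice_cond M -> forall i j k l,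
  (M i *m (M j)^T) *m (M k *m (M l)^T) = (M k *m (M l)^T) *m (M i *m (M j)^T).
Proof.
move=> sM i j k l.
have symL a b : M a *m (M b)^T = M b *m (M a)^T.
  by rewrite -(proj1 (sM a b)) trmx_mul trmxK.
have symR a b : (M a)^T *m M b = (M b)^T *m M a.
  by rewrite -(proj2 (sM a b)) trmx_mul trmxK.
rewrite !mulmxA -(mulmxA (M i)) (symR j k) mulmxA (symL i k) -!mulmxA (symL j l).
by rewrite !mulmxA -(mulmxA (M k) (M i)^T) (symR i l) !mulmxA.
Qed.

Lemma mul_tr_lincomb M (a b : 'I_n -> R) :
  (\sum_i a i *: M i) *m (\sum_j b j *: M j)^T =
  \sum_i \sum_j (a i * b j) *: (M i *m (M j)^T).
Proof.
rewrite linear_sum mulmx_suml; apply: eq_bigr => i _; rewrite mulmx_sumr.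
by apply: eq_bigr => j _; rewrite linearZ /= -scalemxAl -scalemxAr scalerA.
Qed.

Lemma mul_tr_conj Q P (N N' : 'M[R]_n) : P *m P^T = 1%:M ->
  (Q *m N *m P) *m (Q *m N' *m P)^T = Q *m (N *m N'^T) *m Q^T.
Proof. by move=> PP; rewrite !trmx_mul !mulmxA -(mulmxA _ P) PP mulmx1. Qed.

Lemma trmx_conj Q P (N : 'M[R]_n) : (Q *m N *m P)^T = P^T *m N^T *m Q^T.
Proof. by rewrite !trmx_mul mulmxA. Qed.

Lemma trmx_lincomb M (a : 'I_n -> R) : (\sum_i a i *: M i)^T = \sum_i a i *: (M i)^T.
Proof. by rewrite linear_sum; apply: eq_bigr => i _; rewrite linearZ. Qed.

Lemma conj_lincomb (Q P : 'M[R]_n) (M : 'I_n -> 'M[R]_n) (a : 'I_n -> R) :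
  Q *m (\sum_i a i *: M i) *m P = \sum_i a i *: (Q *m M i *m P).
Proof.
rewrite mulmx_sumr mulmx_suml; apply: eq_bigr => i _.
by rewrite -scalemxAr -scalemxAl.
Qed.

Lemma slice_cond_lincomb M (a : 'I_n -> 'I_n -> R) :
  slice_cond M -> slice_cond (fun k => \sum_i a k i *: M i).
Proof.
suff symL (N : 'I_n -> 'M[R]_n) (b : 'I_n -> 'I_n -> R) :
    (forall i j, symmetric_mx (N i *m (N j)^T)) ->
    forall k l, symmetric_mx ((\sum_i b k i *: N i) *m (\sum_j b l j *: N j)^T).
  move=> sM k l; split; first by apply: symL => i j; case: (sM i j).
  rewrite -[\sum_i a l i *: M i]trmxK !(trmx_lincomb M).
  by apply: (symL (fun i => (M i)^T)) => i j; rewrite trmxK; case: (sM i j).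
move=> symN k l; rewrite /symmetric_mx mul_tr_lincomb !linear_sum.
apply: eq_bigr => i _; rewrite linear_sum; apply: eq_bigr => j _.
by rewrite linearZ /= symN.
Qed.

Lemma slice_cond_conj M M' Q P : (forall k, M' k = Q *m M k *m P) ->
  Q^T *m Q = 1%:M -> P *m P^T = 1%:M -> slice_cond M -> slice_cond M'.
Proof.
suff symL (N : 'I_n -> 'M[R]_n) Q' P' : P' *m P'^T = 1%:M ->
    (forall i j, symmetric_mx (N i *m (N j)^T)) ->
    forall k l, symmetric_mx ((Q' *m N k *m P') *m (Q' *m N l *m P')^T).
  move=> M'E QQ PP sM k l; rewrite !M'E; split.
    by apply: symL => // i j; case: (sM i j).
  rewrite -[Q *m M l *m P]trmxK (trmx_conj Q P (M k)) (trmx_conj Q P (M l)).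
  by apply: (symL (fun i => (M i)^T)) => [|i j]; rewrite ?trmxK //; case: (sM i j).
move=> PP symN k l; rewrite /symmetric_mx mul_tr_conj //.
by rewrite trmx_conj trmxK symN.
Qed.

Lemma slice_cond_diag (d : 'I_n -> 'rV[R]_n) : slice_cond (fun k => diag_mx (d k)).
Proof.
move=> k l; rewrite /symmetric_mx !tr_diag_mx !mulmx_diag tr_diag_mx.
by split; congr diag_mx; apply/rowP => i; rewrite !mxE mulrC.
Qed.

Lemma is_diag_conj_lincomb M Q P (a b : 'I_n -> R) : P *m P^T = 1%:M ->
  (forall i j, is_diag_mx (Q *m (M i *m (M j)^T) *m Q^T)) ->
  is_diag_mx ((Q *m (\sum_i a i *: M i) *m P) *m (Q *m (\sum_j b j *: M j) *m P)^T).
Proof.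
move=> PP dM; rewrite mul_tr_conj // mul_tr_lincomb mulmx_sumr mulmx_suml.
apply/is_diag_mxP => x y xy; rewrite summxE big1 // => i _.
rewrite mulmx_sumr mulmx_suml summxE big1 // => j _.
by rewrite -scalemxAr -scalemxAl mxE (is_diag_mxP (dM i j)) ?mulr0.
Qed.

End SliceFamilies.

Lemma slice_cond_codiag (R : rcfType) n (M : 'I_n -> 'M[R]_n) : slice_cond M ->
  exists2 V : 'M[R]_n, orthogonal_mx V &
    forall i j, is_diag_mx (V *m (M i *m (M j)^T) *m V^T).
Proof.
move=> sM; set Ss := [seq M ij.1 *m (M ij.2)^T | ij : 'I_n * 'I_n].
have [|S S'|V VV dV] := @symmetric_codiagonalization _ _ Ss.
- by move=> S /mapP [ij _ ->]; case: (sM ij.1 ij.2).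
- by move=> /mapP [ij _ ->] /mapP [ij' _ ->]; exact: slice_cond_comm.
by exists V => // i j; apply: dV; apply/mapP; exists (i, j); rewrite ?mem_enum.
Qed.

(** * Mode products *)

Section ModeProducts.
Variables (R : comNzRingType) (n : nat).
Implicit Types (A B C : 'M[R]_n) (T : tensor3 R n).

Definition xrot A T : tensor3 R n := fun r j k => \sum_i A r i * T i j k.
Definition yrot A T : tensor3 R n := fun i r k => \sum_j A r j * T i j k.
Definition zrot A T : tensor3 R n := fun i j r => \sum_k A r k * T i j k.

Lemma xslice_xrot A T r : xslice (xrot A T) r = \sum_i A r i *: xslice T i.
Proof. by apply/matrixP => a b; rewrite !mxE summxE; apply: eq_bigr => i _; rewrite !mxE. Qed.
Lemma xslice_yrot A T r : xslice (yrot A T) r = A *m xslice T r.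
Proof. by apply/matrixP => a b; rewrite !mxE; apply: eq_bigr => i _; rewrite !mxE. Qed.
Lemma xslice_zrot A T r : xslice (zrot A T) r = xslice T r *m A^T.
Proof. by apply/matrixP => a b; rewrite !mxE; apply: eq_bigr => i _; rewrite !mxE mulrC. Qed.
Lemma yslice_xrot A T r : yslice (xrot A T) r = A *m yslice T r.
Proof. by apply/matrixP => a b; rewrite !mxE; apply: eq_bigr => i _; rewrite !mxE. Qed.
Lemma yslice_yrot A T r : yslice (yrot A T) r = \sum_i A r i *: yslice T i.
Proof. by apply/matrixP => a b; rewrite !mxE summxE; apply: eq_bigr => i _; rewrite !mxE. Qed.
Lemma yslice_zrot A T r : yslice (zrot A T) r = yslice T r *m A^T.
Proof. by apply/matrixP => a b; rewrite !mxE; apply: eq_bigr => i _; rewrite !mxE mulrC. Qed.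
Lemma zslice_xrot A T r : zslice (xrot A T) r = A *m zslice T r.
Proof. by apply/matrixP => a b; rewrite !mxE; apply: eq_bigr => i _; rewrite !mxE. Qed.
Lemma zslice_yrot A T r : zslice (yrot A T) r = zslice T r *m A^T.
Proof. by apply/matrixP => a b; rewrite !mxE; apply: eq_bigr => i _; rewrite !mxE mulrC. Qed.
Lemma zslice_zrot A T r : zslice (zrot A T) r = \sum_i A r i *: zslice T i.
Proof. by apply/matrixP => a b; rewrite !mxE summxE; apply: eq_bigr => i _; rewrite !mxE. Qed.

Definition rot3 A B C T := xrot A (yrot B (zrot C T)).


Lemma xslice_rot3 A B C T r :
  xslice (rot3 A B C T) r = B *m (\sum_i A r i *: xslice T i) *m C^T.
Proof.
rewrite xslice_xrot conj_lincomb; apply: eq_bigr => i _.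
by rewrite xslice_yrot xslice_zrot mulmxA.
Qed.

Lemma yslice_rot3 A B C T r :
  yslice (rot3 A B C T) r = A *m (\sum_j B r j *: yslice T j) *m C^T.
Proof.
rewrite yslice_xrot yslice_yrot -mulmxA mulmx_suml; congr (_ *m _).
by apply: eq_bigr => j _; rewrite yslice_zrot scalemxAl.
Qed.

Lemma zslice_rot3 A B C T r :
  zslice (rot3 A B C T) r = A *m (\sum_k C r k *: zslice T k) *m B^T.
Proof. by rewrite zslice_xrot zslice_yrot zslice_zrot mulmxA. Qed.

Lemma orthogonal_mx_sum A i i' : orthogonal_mx A -> \sum_r A r i * A r i' = (i == i')%:R.
Proof.
by move/matrixP/(_ i i'); rewrite !mxE => <-; apply: eq_bigr => r _; rewrite mxE.
Qed.

Lemma xslice_rot3K A B C T i :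
  orthogonal_mx A -> orthogonal_mx B -> orthogonal_mx C ->
  xslice T i = \sum_r A r i *: (B^T *m xslice (rot3 A B C T) r *m C).
Proof.
move=> AA BB CC.
under eq_bigr do rewrite xslice_rot3 !mulmxA BB mul1mx -mulmxA CC mulmx1 scaler_sumr.
rewrite exchange_big.
under eq_bigr => i' _ do
  rewrite (eq_bigr _ (fun r _ => scalerA _ _ _)) -scaler_suml orthogonal_mx_sum //.
rewrite (bigD1 i) //= eqxx scale1r big1 ?addr0 // => i' i'i.
by rewrite eq_sym (negbTE i'i) scale0r.
Qed.

End ModeProducts.

(** * Monomial tensors *)

Lemma exchange_sum_mul (R : comPzSemiRingType) (I J : finType)
    (c : J -> R) (a : I -> J -> R) (b : I -> R) :
  \sum_j c j * (\sum_i a i j * b i) = \sum_i (\sum_j c j * a i j) * b i.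
Proof.
under eq_bigr do rewrite mulr_sumr.
rewrite exchange_big; apply: eq_bigr => i _; rewrite mulr_suml.
by apply: eq_bigr => j _; rewrite mulrA.
Qed.

Lemma mulmx_trmxE (R : pzSemiRingType) m n p (M : 'M[R]_(m, n)) (M' : 'M[R]_(p, n)) x y :
  (M *m M'^T) x y = \sum_k M x k * M' y k.
Proof. by rewrite mxE; apply: eq_bigr => k _; rewrite mxE. Qed.

Lemma trmx_mulmxE (R : pzSemiRingType) m n p (M : 'M[R]_(m, n)) (M' : 'M[R]_(m, p)) x y :
  (M^T *m M') x y = \sum_j M j x * M' j y.
Proof. by rewrite mxE; apply: eq_bigr => j _; rewrite mxE. Qed.

Lemma diag_mx_sqr_eq0 (R : idomainType) n (P : 'M[R]_n) :
  is_diag_mx P -> P *m P = 0 -> P = 0.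
Proof.
move=> /is_diag_mxP dP PP; apply/matrixP => i j; rewrite mxE.
have [<-|ij] := eqVneq i j; last exact: dP.
have /matrixP /(_ i i) := PP; rewrite !mxE (bigD1 i) //= big1 ?addr0 => [|k ki].
  by move/eqP; rewrite mulf_eq0 orbb => /eqP.
by rewrite dP ?mul0r // eq_sym.
Qed.

Lemma mulmx_trmx_diag_neq0 (R : realDomainType) m n (M : 'M[R]_(m, n)) i j :
  M i j != 0 -> (M *m M^T) i i != 0.
Proof.
move=> Mij; rewrite mulmx_trmxE; apply: contra Mij => /eqP.
under eq_bigr do rewrite -expr2.
by move/psumr_eq0P => /(_ (fun k _ => sqr_ge0 _) j isT) /eqP; rewrite sqrf_eq0.
Qed.

Lemma injective_in_perm (T : finType) (S : {set T}) (f : T -> T) :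
  {in S &, injective f} -> exists s : {perm T}, {in S, s =1 f}.
Proof.
move=> injf; set A := enum (~: S); set B := enum (~: (f @: S)).
have sizeAB : size A = size B.
  rewrite /A /B -!cardE (cardsCs (~: S)) (cardsCs (~: (f @: S))) !setCK.
  by rewrite card_in_imset.
pose g x := if x \in S then f x else nth x B (index x A).
have gB x : x \notin S -> g x \in ~: (f @: S).
  move=> xS; rewrite /g (negbTE xS) -(mem_enum (mem (~: (f @: S)))) -/B mem_nth //.
  by rewrite -sizeAB index_mem /A mem_enum inE.
have injg : injective g.
  move=> x y; have [xS|xS] := boolP (x \in S); have [yS|yS] := boolP (y \in S).
  - by rewrite /g xS yS; apply: injf.
  - by move=> gxy; have := gB y yS; rewrite -gxy /g xS inE imset_f.
  - by move=> gxy; have := gB x xS; rewrite gxy /g yS inE imset_f.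
  have [xA yA] : x \in A /\ y \in A by rewrite /A !mem_enum !inE.
  rewrite /g (negbTE xS) (negbTE yS) => /eqP.
  rewrite (set_nth_default x y) ?nth_uniq ?enum_uniq -?sizeAB ?index_mem //.
  by move=> /eqP /(congr1 (nth x A)); rewrite !nth_index.
by exists (perm injg) => x xS; rewrite permE /g xS.
Qed.

Section MonomialSlices.
Variables (R : realDomainType) (n : nat) (U : tensor3 R n).
Local Notation N := (xslice U).
Hypothesis dN : forall k l, is_diag_mx (N k *m (N l)^T).
Hypothesis dNt : forall k l, is_diag_mx ((N k)^T *m N l).
Hypothesis dZ : forall k l, is_diag_mx (zslice U k *m (zslice U l)^T).
Hypothesis sY : slice_cond (yslice U).
Hypothesis sZ : slice_cond (zslice U).

Lemma trmx_xslice_mul_eq0 r s : r != s -> (N r)^T *m N s = 0.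
Proof.
move=> rs; apply/matrixP => k l; rewrite [RHS]mxE -(is_diag_mxP (dZ k l) r s rs).
by rewrite trmx_mulmxE mulmx_trmxE; apply: eq_bigr => j _; rewrite !mxE.
Qed.

Lemma xslice_mul_trmx_eq0 r s : r != s -> N r *m (N s)^T = 0.
Proof.
move=> rs; apply: diag_mx_sqr_eq0 (dN r s) _.
by rewrite mulmxA -(mulmxA (N r)) trmx_xslice_mul_eq0 1?eq_sym // mulmx0 mul0mx.
Qed.

Lemma sum_trmx_xslice_mul s x y a b :
  \sum_i ((N s)^T *m N i) x y * N i a b = ((N s)^T *m N s) x y * N s a b.
Proof.
rewrite (bigD1 s) //= big1 ?addr0 // => i si.
by rewrite trmx_xslice_mul_eq0 1?eq_sym // mxE mul0r.
Qed.

Lemma sum_xslice_mul_trmx s x y a b :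
  \sum_i (N s *m (N i)^T) x y * N i a b = (N s *m (N s)^T) x y * N s a b.
Proof.
rewrite (bigD1 s) //= big1 ?addr0 // => i si.
by rewrite xslice_mul_trmx_eq0 1?eq_sym // mxE mul0r.
Qed.

Lemma xslice_col_support s l l' m :
  l != l' -> ((N s)^T *m N s) l l * N s m l' = 0.
Proof.
move=> ll'; rewrite -sum_trmx_xslice_mul.
under eq_bigr do rewrite trmx_mulmxE.
rewrite -exchange_sum_mul.
(* The symmetry of the matrices [Y_j^T Y_m] swaps the column indices [l] and [l']. *)
have symY j : \sum_i N i j l * N i m l' = \sum_i N i j l' * N i m l.
  rewrite (eq_bigr (fun i => yslice U j i l * yslice U m i l')) => [|i _];
    last by rewrite !mxE.
  rewrite [RHS](eq_bigr (fun i => yslice U j i l' * yslice U m i l)) => [|i _];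
    last by rewrite !mxE.
  by have [_ /matrixP /(_ l' l)] := sY j m; rewrite mxE !trmx_mulmxE.
under eq_bigr do rewrite symY.
rewrite exchange_sum_mul.
under eq_bigr do rewrite -trmx_mulmxE.
by rewrite sum_trmx_xslice_mul (is_diag_mxP (dNt s s) l l' ll') mul0r.
Qed.

Lemma xslice_row_support s j j' l :
  j != j' -> (N s *m (N s)^T) j j * N s j' l = 0.
Proof.
move=> jj'; rewrite -sum_xslice_mul_trmx.
under eq_bigr do rewrite mulmx_trmxE.
rewrite -exchange_sum_mul.
(* The symmetry of the matrices [Z_k^T Z_l] swaps the row indices [j] and [j']. *)
have symZ k : \sum_i N i j k * N i j' l = \sum_i N i j' k * N i j l.
  rewrite (eq_bigr (fun i => zslice U k i j * zslice U l i j')) => [|i _];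
    last by rewrite !mxE.
  rewrite [RHS](eq_bigr (fun i => zslice U k i j' * zslice U l i j)) => [|i _];
    last by rewrite !mxE.
  by have [_ /matrixP /(_ j' j)] := sZ k l; rewrite mxE !trmx_mulmxE.
under eq_bigr do rewrite symZ.
rewrite exchange_sum_mul.
under eq_bigr do rewrite -mulmx_trmxE.
by rewrite sum_xslice_mul_trmx (is_diag_mxP (dN s s) j j' jj') mul0r.
Qed.

Lemma xslice_support_eq s p q p' q' :
  N s p q != 0 -> N s p' q' != 0 -> p = p' /\ q = q'.
Proof.
move=> spq spq'; split; apply/eqP; apply: contraT => neq.
  have /eqP := xslice_row_support s q' neq.
  by rewrite mulf_eq0 (negbTE (mulmx_trmx_diag_neq0 spq)) (negbTE spq').
have spqT : (N s)^T q p != 0 by rewrite mxE.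
have := mulmx_trmx_diag_neq0 spqT; rewrite trmxK => /negbTE sqq.
by have /eqP := xslice_col_support s p' neq; rewrite mulf_eq0 sqq (negbTE spq').
Qed.

Lemma xslice_support_disjoint r s p q p' q' : r != s ->
  N r p q != 0 -> N s p' q' != 0 -> (p != p') && (q != q').
Proof.
move=> rs rpq spq'; apply/andP; split; apply/eqP => same.
  have /matrixP /(_ q q') := trmx_xslice_mul_eq0 rs.
  rewrite trmx_mulmxE mxE (bigD1 p) //= big1 ?addr0 => [|j jp]; last first.
    have [->|rjq] := eqVneq (N r j q) 0; first by rewrite mul0r.
    by case: (xslice_support_eq rjq rpq) => /eqP; rewrite (negbTE jp).
  by move/eqP; rewrite mulf_eq0 (negbTE rpq) same (negbTE spq').
have /matrixP /(_ p p') := xslice_mul_trmx_eq0 rs.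
rewrite mulmx_trmxE mxE (bigD1 q) //= big1 ?addr0 => [|k kq]; last first.
  have [->|rpk] := eqVneq (N r p k) 0; first by rewrite mul0r.
  by case: (xslice_support_eq rpk rpq) => _ /eqP; rewrite (negbTE kq).
by move/eqP; rewrite mulf_eq0 (negbTE rpq) same (negbTE spq').
Qed.

Lemma xslices_monomial : exists (s t : {perm 'I_n}) (al : 'I_n -> R),
  forall r, N r = al r *: delta_mx (s r) (t r).
Proof.
(* The position of the nonzero entry of [N r], if any ([(r, r)] is a dummy). *)
pose pos r := odflt (r, r) [pick pq | N r pq.1 pq.2 != 0].
have posP r : N r != 0 -> N r (pos r).1 (pos r).2 != 0.
  rewrite /pos; case: pickP => [[p q] /= pq _ //|N0]; apply: contraNN => _.
  by apply/eqP/matrixP => p q; rewrite [RHS]mxE; apply/eqP/negbFE; exact: (N0 (p, q)).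
set S := [set r | N r != 0].
have injS (f : 'I_n * 'I_n -> 'I_n) :
    (forall x y, f x = f y -> (x.1 == y.1) || (x.2 == y.2)) ->
    {in S &, injective (f \o pos)}.
  move=> f_eq r s; rewrite !inE => /posP rS /posP sS /f_eq fe.
  apply/eqP; apply: contraLR fe => rs; rewrite negb_or.
  exact: xslice_support_disjoint rs rS sS.
have [s sE] : exists s : {perm 'I_n}, {in S, s =1 fst \o pos}.
  by apply/injective_in_perm/injS => x y ->; rewrite eqxx.
have [t tE] : exists t : {perm 'I_n}, {in S, t =1 snd \o pos}.
  by apply/injective_in_perm/injS => x y ->; rewrite eqxx orbT.
exists s, t, (fun r => N r (pos r).1 (pos r).2) => r.
have [rS|] := boolP (r \in S); last first.
  by rewrite inE negbK => /eqP N0; rewrite N0 mxE scale0r.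
have rpq : N r (pos r).1 (pos r).2 != 0 by apply: posP; rewrite inE in rS.
rewrite sE ?tE //=; apply/matrixP => p q; rewrite [RHS]mxE [delta_mx _ _ _ _]mxE.
have [Npq0|Npq] := eqVneq (N r p q) 0; last first.
  by case: (xslice_support_eq rpq Npq) => <- <-; rewrite !eqxx mulr1.
case: andP => [[/eqP pE /eqP qE]|_]; last by rewrite Npq0 mulr0.
by move: rpq; rewrite -pE -qE Npq0 eqxx.
Qed.

End MonomialSlices.

(** * Orthogonal decompositions *)

Section OrthogonalDecomposition.
Variables (R : comNzRingType) (n : nat).
Implicit Types (T : tensor3 R n) (A B C : 'M[R]_n).

Definition orth_decomp T (al : 'I_n -> R) A B C :=
  [/\ orthogonal_mx A, orthogonal_mx B, orthogonal_mx C &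
    forall i j k, T i j k = \sum_r al r * A r i * B r j * C r k].

Lemma sum_mul_delta_cV (F : 'I_n -> R) a :
  \sum_p F p * (delta_mx a 0 : 'cV[R]_n) p 0 = F a.
Proof.
rewrite (bigD1 a) //= big1 => [|p pa]; first by rewrite mxE !eqxx mulr1 addr0.
by rewrite mxE (negbTE pa) mulr0.
Qed.

Lemma trilin_delta T i j k :
  trilin T (delta_mx i 0) (delta_mx j 0) (delta_mx k 0) = T i j k.
Proof.
rewrite /trilin; under eq_bigr do under eq_bigr do rewrite sum_mul_delta_cV.
by under eq_bigr do rewrite sum_mul_delta_cV; rewrite sum_mul_delta_cV.
Qed.

Lemma mulr_sum3 (t : R) (a b c : 'I_n -> R) :
  t * (\sum_i a i) * (\sum_j b j) * (\sum_k c k) =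
  \sum_i \sum_j \sum_k t * a i * b j * c k.
Proof.
rewrite [t * _]mulr_sumr !mulr_suml; apply: eq_bigr => i _.
rewrite [t * a i * _]mulr_sumr mulr_suml; apply: eq_bigr => j _.
by rewrite mulr_sumr.
Qed.

Lemma trilin_decomp T al A B C :
  (forall i j k, T i j k = \sum_r al r * A r i * B r j * C r k) ->
  forall x y z, trilin T x y z = diag_trilin al (A *m x) (B *m y) (C *m z).
Proof.
move=> decT x y z; rewrite /trilin /diag_trilin.
under eq_bigr do under eq_bigr do under eq_bigr do rewrite decT !mulr_suml.
under eq_bigr do under eq_bigr do rewrite exchange_big.
under eq_bigr do rewrite exchange_big.
rewrite exchange_big; apply: eq_bigr => r _; rewrite !mxE mulr_sum3.
by do 3!(apply: eq_bigr => ? _); ring.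
Qed.

Lemma in_OTP T : in_OT T <-> exists al A B C, orth_decomp T al A B C.
Proof.
split=> [[A [B [C [al [AA BB CC trT]]]]]|[al [A [B [C [AA BB CC decT]]]]]].
  exists al, A, B, C; split=> // i j k; rewrite -trilin_delta trT.
  by apply: eq_bigr => r _; rewrite -!colE !mxE.
by exists A, B, C, al; split=> //; apply: trilin_decomp.
Qed.

Lemma slice_cond_of_decomp (M : 'I_n -> 'M[R]_n) (d : 'I_n -> 'I_n -> R) P Q :
  orthogonal_mx P -> orthogonal_mx Q ->
  (forall k a b, M k a b = \sum_r d k r * P r a * Q r b) -> slice_cond M.
Proof.
move=> PP QQ ME.
apply: (slice_cond_conj (M := fun k => diag_mx (\row_r d k r)) (Q := P^T) (P := Q)).
- move=> k; apply/matrixP => a b; rewrite ME mul_mx_diag mxE.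
  by apply: eq_bigr => r _; rewrite !mxE; ring.
- by rewrite trmxK; apply: mulmx1C.
- exact: mulmx1C.
exact: slice_cond_diag.
Qed.

Lemma orthogonal_row_perm (s : 'S_n) B :
  orthogonal_mx B -> orthogonal_mx (row_perm s B).
Proof.
rewrite /orthogonal_mx row_permE trmx_mul tr_perm_mx mulmxA -(mulmxA B^T).
by rewrite -perm_mxM mulVg perm_mx1 mulmx1.
Qed.

Lemma conj_delta_mxE B C p q j k :
  (B^T *m delta_mx p q *m C) j k = B p j * C q k.
Proof.
rewrite -(mul_delta_mx (0 : 'I_1)) mulmxA -colE -mulmxA -rowE mxE big_ord1.
by rewrite !mxE.
Qed.

End OrthogonalDecomposition.

Section SliceCondDecomp.
Variables (R : rcfType) (n : nat) (T : tensor3 R n).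
Hypotheses (sX : slice_cond (xslice T)) (sY : slice_cond (yslice T)).
Hypothesis sZ : slice_cond (zslice T).

Lemma rot3_xslices_monomial : exists A B C, [/\ orthogonal_mx A, orthogonal_mx B,
  orthogonal_mx C & exists (s t : {perm 'I_n}) (al : 'I_n -> R),
    forall r, xslice (rot3 A B C T) r = al r *: delta_mx (s r) (t r)].
Proof.
have [A AA dA] := slice_cond_codiag sZ.
have [B BB dB] := slice_cond_codiag sX.
have [C CC dC] := slice_cond_codiag ((slice_cond_trmx _).2 sX).
exists A, B, C; split=> //; set U := rot3 A B C T.
have tBB : B^T *m B^T^T = 1%:M by rewrite trmxK.
have tCC : C^T *m C^T^T = 1%:M by rewrite trmxK.
have xsT r : (xslice U r)^T = C *m (\sum_i A r i *: (xslice T i)^T) *m B^T.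
  by rewrite xslice_rot3 trmx_conj trmxK trmx_lincomb.
apply: xslices_monomial.
- by move=> k l; rewrite !xslice_rot3; apply: is_diag_conj_lincomb.
- move=> k l; rewrite -[xslice U l]trmxK !xsT.
  by apply: is_diag_conj_lincomb => // i j; rewrite trmxK.
- by move=> k l; rewrite !zslice_rot3; apply: is_diag_conj_lincomb.
- exact: (slice_cond_conj (yslice_rot3 A B C T) AA tCC (slice_cond_lincomb _ sY)).
exact: (slice_cond_conj (zslice_rot3 A B C T) AA tBB (slice_cond_lincomb _ sZ)).
Qed.

Lemma orth_decomp_of_slice_cond : exists al A B C, orth_decomp T al A B C.
Proof.
have [A [B [C [AA BB CC [s [t [al Umon]]]]]]] := rot3_xslices_monomial.
exists al, A, (row_perm s B), (row_perm t C).
split; [by []| exact: orthogonal_row_perm | exact: orthogonal_row_perm | move=> i j k].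
have /matrixP /(_ j k) := xslice_rot3K T i AA BB CC.
rewrite mxE summxE => ->; apply: eq_bigr => r _.
rewrite Umon -scalemxAr -scalemxAl 2!mxE conj_delta_mxE !mxE.
by ring.
Qed.

End SliceCondDecomp.

Unset Implicit Arguments.
Theorem theorem35 (R : rcfType) (n : nat) (T : tensor3 R n) :
  in_OT T <->
  [/\ slice_cond (xslice T), slice_cond (yslice T) & slice_cond (zslice T)].
Proof.
rewrite in_OTP; split=> [[al [A [B [C [AA BB CC decT]]]]]|[sX sY sZ]].
  split; [apply: (slice_cond_of_decomp (d := fun k r => al r * A r k) BB CC)
         |apply: (slice_cond_of_decomp (d := fun k r => al r * B r k) AA CC)
         |apply: (slice_cond_of_decomp (d := fun k r => al r * C r k) AA BB)];
    by move=> k a b; rewrite mxE decT; apply: eq_bigr => r _; ring.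
exact: orth_decomp_of_slice_cond.
Qed.
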